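(* Let $m>2\times 10^{31}$ be a positive integer. Then $W(m)<m^{2/9}$.
   Context: For a positive integer $m$, $\omega(m)$ is the number of distinct prime divisors of $m$ and $W(m)=2^{\omega(m)}$. *)

From mathcomp Require Import all_boot.
From Stdlib Require Import Reals.

Definition omega (m : nat) : nat := size (primes m).
Definition W (m : nat) : nat := 2 ^ omega m.

From Pilot Require Import Defs.
(* Reals comes first so that [^] on nat means [expn]; in Defs it means [Nat.pow]. *)
From Stdlib Require Import Reals Lra ZArith.
From mathcomp Require Import all_boot.

(* Every prime p satisfies 2^18 <= p^3 * w p with w p := floor(2^18 / p^3) + 1,
   and w p = 1 as soon as p^3 > 2^18, i.e. for p >= 65.  Multiplying over the
   primes of m, whose product is at most m, gives 2^(18 omega(m)) <= m^3 * C with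
   C the product of w p over the primes below 65.  As C < 1.3 * 10^29 < m, this
   yields W(m)^18 < m^4, i.e. W(m) < m^(2/9). *)

Definition primes_below (N : nat) : seq nat := [seq p <- iota 0 N | prime p].

Lemma leq_prod_subset (I : eqType) (s s' : seq I) (F : I -> nat) :
  uniq s -> uniq s' -> {subset s <= s'} -> (forall i, 0 < F i) ->
  \prod_(i <- s) F i <= \prod_(i <- s') F i.
Proof.
move=> us us' ss' F_gt0.
rewrite -(perm_big _ (permEl (perm_filterC [in s] s'))) big_cat /=.
have -> : \prod_(i <- [seq i <- s' | i \in s]) F i = \prod_(i <- s) F i.
  apply/perm_big/uniq_perm; rewrite ?filter_uniq // => i.
  by rewrite mem_filter andb_idr //; apply: ss'.
by rewrite leq_pmulr // prodn_gt0.
Qed.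

Lemma leq_expn2r m n e : m <= n -> m ^ e <= n ^ e.
Proof. by move=> le_mn; elim: e => // e IH; rewrite !expnS leq_mul. Qed.

Lemma prod_primes_leq m : 0 < m -> \prod_(p <- primes m) p <= m.
Proof.
move=> m_gt0; rewrite {2}(prod_prime_decomp m_gt0) prime_decompE big_map /=.
rewrite big_seq [X in _ <= X]big_seq; apply: leq_prod => p.
rewrite -logn_gt0 => logp_gt0; rewrite -{1}(expn1 p) leq_pexp2l //.
by apply: prime_gt0; move: logp_gt0; rewrite logn_gt0 mem_primes => /andP[].
Qed.

Lemma prod_primes_leq_primes_below (N m : nat) (w : nat -> nat) :
    (forall p, 0 < w p) -> (forall p, N <= p -> w p = 1) ->
  \prod_(p <- primes m) w p <= \prod_(p <- primes_below N) w p.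
Proof.
move=> w_gt0 w_big.
rewrite (bigID (fun p => p < N)) /= [X in _ * X]big1 ?muln1; last first.
  by move=> p; rewrite -leqNgt => /w_big.
rewrite -big_filter; apply: leq_prod_subset => //.
- by rewrite filter_uniq ?primes_uniq.
- by rewrite filter_uniq ?iota_uniq.
by move=> p; rewrite !mem_filter mem_iota /= mem_primes => /andP[-> /and3P[-> _ _]].
Qed.

Lemma expn_omega_leq (b e N m : nat) : 0 < m -> b < N ^ e ->
  b ^ omega m <= m ^ e * \prod_(p <- primes_below N) (b %/ p ^ e).+1.
Proof.
move=> m_gt0 b_lt.
have weight_ge p : prime p -> b <= p ^ e * (b %/ p ^ e).+1.
  by move=> p_prime; rewrite mulnC ltnW // ltn_ceil // expn_gt0 prime_gt0.
have weight_eq1 p : N <= p -> (b %/ p ^ e).+1 = 1.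
  by move=> N_le_p; rewrite divn_small // (leq_trans b_lt) ?leq_expn2r.
have prod_expn : \prod_(p <- primes m) p ^ e = (\prod_(p <- primes m) p) ^ e.
  by rewrite (big_morph (fun x => x ^ e) (fun x y => expnMn x y e) (exp1n e)).
have -> : b ^ omega m = \prod_(p <- primes m) b.
  by rewrite big_const_seq count_predT iter_muln_1.
apply: (@leq_trans (\prod_(p <- primes m) (p ^ e * (b %/ p ^ e).+1))).
  rewrite big_seq [X in _ <= X]big_seq; apply: leq_prod => p.
  by rewrite mem_primes => /and3P[/weight_ge].
rewrite big_split /= prod_expn leq_mul ?leq_expn2r ?prod_primes_leq //.
exact: prod_primes_leq_primes_below.
Qed.

Open Scope R_scope.

Lemma INR_expn a n : INR (a ^ n)%N = INR a ^ n.
Proof. by elim: n => [|n IH]; rewrite ?expn0 // expnS mult_INR IH. Qed.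

Lemma lt_Rpower_of_pow (x y : R) (n d : nat) :
  0 < x -> 0 < y -> (0 < n)%N -> x ^ n < y ^ d -> x < Rpower y (INR d / INR n).
Proof.
move=> x_gt0 y_gt0 n_gt0 lt_xy.
have n_pos : 0 < INR n by apply/lt_0_INR/ltP.
have ln_lt : INR n * ln x < INR d * ln y.
  by rewrite -!ln_pow //; apply: ln_increasing => //; apply: pow_lt.
rewrite -[x]exp_ln // /Rpower; apply: exp_increasing.
apply: (Rmult_lt_reg_l (INR n)) => //.
by replace (INR n * (INR d / INR n * ln y)) with (INR d * ln y) by (field; lra).
Qed.

Lemma INR_prod_weights_lt :
  INR (\prod_(p <- primes_below 65) (2 ^ 18 %/ p ^ 3).+1) < 2 * 10 ^ 31.
Proof.
rewrite INR_IZR_INZ (big_morph Z.of_nat Nat2Z.inj_mul erefl).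
have -> : \big[Z.mul/1%Z]_(p <- primes_below 65) Z.of_nat (2 ^ 18 %/ p ^ 3).+1
          = 127583798042887246689767424000%Z by rewrite unlock; vm_compute.
lra.
Qed.

Theorem lemma4p1 (m : nat) (hm : 2 * 10 ^ 31 < INR m) :
  INR (W m) < Rpower (INR m) (2 / 9).
Proof.
have m_pos : 0 < INR m by lra.
have m_gt0 : (0 < m)%N by apply/ltP/INR_lt.
have omega_bound := @expn_omega_leq (2 ^ 18) 3 65 m m_gt0 isT.
have W_pow : INR (W m) ^ 18 = INR ((2 ^ 18) ^ omega m)%N.
  by rewrite /W pow_INR !INR_expn -!pow_mult Nat.mul_comm.
have W_pow_lt : INR (W m) ^ 18 < INR m ^ 4.
  rewrite W_pow; apply: Rle_lt_trans (le_INR _ _ (elimT leP omega_bound)) _.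
  rewrite mult_INR !INR_expn (_ : INR m ^ 4 = INR m ^ 3 * INR m); last by ring.
  apply: Rmult_lt_compat_l; first exact: pow_lt.
  by have := INR_prod_weights_lt; lra.
rewrite (_ : 2 / 9 = INR 4 / INR 18); last by rewrite !INR_IZR_INZ /=; field.
by apply: lt_Rpower_of_pow => //; rewrite /W pow_INR; apply/pow_lt/lt_0_INR/ltP.
Qed.
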